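(* Let $p,N\in\mathbb{N}$, $x_0<\cdots<x_N$, and data $y_{n,2k}\in\mathbb{R}$ ($n=0,\dots,N$, $k=0,\dots,p$). For $\alpha',\alpha''\in\Theta_{2p}$ let $\ell_{\alpha'}$, $\ell_{\alpha''}$ be the Lidstone FIFs for this data with scaling factors $\alpha',\alpha''$. Then for every $k=1,\dots,p$, $$\|\ell_{\alpha'}^{(2k)}-\ell_{\alpha''}^{(2k)}\|_\infty\le\frac{|\alpha'-\alpha''|_\infty}{\mu^{2k}-|\alpha'|_\infty}\big(\|\ell_{\alpha''}^{(2k)}\|_\infty+M_{2k,2p}\big),$$ where $\mu=\min_{1\le n\le N}a_n$ and $M_{2k,2p}=\frac{2\rho\pi}{3}\sum_{l=0}^{p-k}\big(\frac{x_N-x_0}{\pi}\big)^{2l}$.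
   Context: Lidstone polynomials $\Lambda_l$: $\Lambda_0(x)=x$, $\Lambda_l''=\Lambda_{l-1}$, $\Lambda_l(0)=\Lambda_l(1)=0$ for $l\ge1$. $a_n=\frac{x_n-x_{n-1}}{x_N-x_0}$, $L_n(x)=a_nx+\frac{x_Nx_{n-1}-x_0x_n}{x_N-x_0}$. $\Theta_{2p}=\{\alpha\in\mathbb{R}^N:|\alpha_n|<a_n^{2p}\ \forall n\}$. For $\alpha\in\Theta_{2p}$, the Lidstone FIF $\ell_\alpha$ is the unique $C^{2p}[x_0,x_N]$ function satisfying $\ell_\alpha(L_n(x))=\alpha_n\ell_\alpha(x)+q_n(x)$ for $x\in[x_0,x_N]$, $n=1,\dots,N$, where $q_n(x)=\sum_{l=0}^p[(a_n^{2l}y_{n-1,2l}-\alpha_ny_{0,2l})\Lambda_l(\frac{x_N-x}{x_N-x_0})+(a_n^{2l}y_{n,2l}-\alpha_ny_{N,2l})\Lambda_l(\frac{x-x_0}{x_N-x_0})](x_N-x_0)^{2l}$; it satisfies $\ell_\alpha^{(2k)}(x_n)=y_{n,2k}$. Notation: $|\alpha|_\infty=\max_n|\alpha_n|$, $\|f\|_\infty=\sup_{[x_0,x_N]}|f|$, $\rho=\max_{0\le k\le p}\max\{|y_{0,2k}|,|y_{N,2k}|\}$.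
   Formalization: The bound is asserted only for scaling factors α′ that satisfy $|\alpha'|_\infty<\mu^{2k}$ as well as α′ ∈ Θ₂ₚ, so its denominator $\mu^{2k}-|\alpha'|_\infty$ is positive. The statement above fails without it. *)

From Stdlib Require Import Reals Lra Lia Classical ClassicalEpsilon.
Open Scope R_scope.

(* Lam 0 t = t; for l >= 0, Lam (l+1) is twice differentiable on R with
   (Lam (l+1))'' = Lam l and Lam (l+1) 0 = Lam (l+1) 1 = 0.
   These conditions determine the family uniquely. *)
Definition lidstone_family (Lam : nat -> R -> R) : Prop :=
  (forall t, Lam 0%nat t = t) /\
  (forall l : nat, exists dL : R -> R,
      (forall t, derivable_pt_lim (Lam (S l)) t (dL t)) /\
      (forall t, derivable_pt_lim dL t (Lam l t)) /\
      Lam (S l) 0 = 0 /\ Lam (S l) 1 = 0).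

Definition deriv_on (a b : R) (f f' : R -> R) : Prop :=
  forall t, a <= t <= b ->
    limit1_in (fun s => (f s - f t) / (s - t))
              (fun s => a <= s <= b /\ s <> t) (f' t) t.

Definition cont_on (a b : R) (f : R -> R) : Prop :=
  forall t, a <= t <= b -> limit1_in f (fun s => a <= s <= b) (f t) t.

Definition Cn_derivs (n : nat) (a b : R) (f : R -> R) (D : nat -> R -> R) : Prop :=
  (forall t, a <= t <= b -> D 0%nat t = f t) /\
  (forall j : nat, (j < n)%nat -> deriv_on a b (D j) (D (S j))) /\
  cont_on a b (D n).

Definition sup_norm (a b : R) (g : R -> R) : R :=
  epsilon (inhabits 0)
    (fun s => is_lub (fun v => exists t, a <= t <= b /\ v = Rabs (g t)) s).

Fixpoint max_0_to (f : nat -> R) (m : nat) : R :=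
  match m with
  | O => f O
  | S m' => Rmax (max_0_to f m') (f m)
  end.

(* max_{1 <= i <= m} f i   (meaningful for m >= 1) *)
Fixpoint max_1_to (f : nat -> R) (m : nat) : R :=
  match m with
  | O => f O
  | S O => f 1%nat
  | S m' => Rmax (max_1_to f m') (f m)
  end.

(* min_{1 <= i <= m} f i   (meaningful for m >= 1) *)
Fixpoint min_1_to (f : nat -> R) (m : nat) : R :=
  match m with
  | O => f O
  | S O => f 1%nat
  | S m' => Rmin (min_1_to f m') (f m)
  end.

Definition vnorm (N : nat) (al : nat -> R) : R := max_1_to (fun n => Rabs (al n)) N.

Definition a_coef (x : nat -> R) (N n : nat) : R :=
  (x n - x (n - 1)%nat) / (x N - x 0%nat).

Definition L_map (x : nat -> R) (N n : nat) (t : R) : R :=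
  a_coef x N n * t + (x N * x (n - 1)%nat - x 0%nat * x n) / (x N - x 0%nat).

Definition in_Theta (p : nat) (x : nat -> R) (N : nat) (al : nat -> R) : Prop :=
  forall n : nat, (1 <= n <= N)%nat -> Rabs (al n) < a_coef x N n ^ (2 * p)%nat.

(* y n j = y_{n,j}; only j = 2l (0 <= l <= p) is used *)
Definition q_fun (Lam : nat -> R -> R) (p : nat) (x : nat -> R) (N : nat)
    (y : nat -> nat -> R) (al : nat -> R) (n : nat) (t : R) : R :=
  sum_f_R0 (fun l =>
     ((a_coef x N n ^ (2 * l)%nat * y (n - 1)%nat (2 * l)%nat - al n * y 0%nat (2 * l)%nat)
         * Lam l ((x N - t) / (x N - x 0%nat))
      + (a_coef x N n ^ (2 * l)%nat * y n (2 * l)%nat - al n * y N (2 * l)%nat)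
         * Lam l ((t - x 0%nat) / (x N - x 0%nat)))
     * (x N - x 0%nat) ^ (2 * l)%nat) p.

Definition lidstone_FIF_eq (Lam : nat -> R -> R) (p : nat) (x : nat -> R) (N : nat)
    (y : nat -> nat -> R) (al : nat -> R) (f : R -> R) : Prop :=
  forall n : nat, (1 <= n <= N)%nat ->
    forall t, x 0%nat <= t <= x N ->
      f (L_map x N n t) = al n * f t + q_fun Lam p x N y al n t.

Definition rho (p N : nat) (y : nat -> nat -> R) : R :=
  max_0_to (fun k => Rmax (Rabs (y 0%nat (2 * k)%nat)) (Rabs (y N (2 * k)%nat))) p.

Definition M_const (p k : nat) (x : nat -> R) (N : nat) (y : nat -> nat -> R) : R :=
  2 * rho p N y * PI / 3 *
  sum_f_R0 (fun l => ((x N - x 0%nat) / PI) ^ (2 * l)%nat) (p - k).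

(* Differentiating the self-referential equations [2k] times shows that
   [Delta = l1^(2k) - l2^(2k)] satisfies, for [t] in [[x_0, x_N]],
     [a_n^(2k) Delta (L_n t) = alpha'_n Delta t + (alpha'_n - alpha''_n) (l2^(2k) t - R_k t)],
   where [R_k] is the [2k]-th derivative of the part of [q_n] multiplied by [- alpha_n].
   The maps [L_n] cover [[x_0, x_N]], so taking suprema yields
     [mu^(2k) |Delta| <= |alpha'| |Delta| + |alpha' - alpha''| (|l2^(2k)| + |R_k|)].
   Finally [|R_k| <= M_{2k,2p}] follows from [|Lam_m| <= (PI/3) PI^(-2m)] on [[0,1]], which
   comes from the maximum principle: [Lam_(m+1)] vanishes at [0] and [1] and its second
   derivative [Lam_m] is dominated by that of a multiple of [- sin (PI s)]. *)

From Stdlib Require Import Reals Lra Lia ClassicalEpsilon FunctionalExtensionality.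
From Coquelicot Require Import Coquelicot.
Open Scope R_scope.

Lemma limit1_in_subdomain f (D D' : R -> Prop) l x0 :
  (forall s, D' s -> D s) -> limit1_in f D l x0 -> limit1_in f D' l x0.
Proof.
  intros HD H eps Heps. destruct (H eps Heps) as [alp [Halp Hf]].
  exists alp; split; [exact Halp|]. intros s [Hs Hd]. apply Hf; auto.
Qed.

Lemma limit1_in_const c D x0 : limit1_in (fun _ => c) D c x0.
Proof. exact (limit_free (fun _ => c) D 0 x0). Qed.

Section IntervalCalculus.
Variables a b : R.

Lemma deriv_on_ext f g f' :
  deriv_on a b f f' -> (forall t, a <= t <= b -> f t = g t) -> deriv_on a b g f'.
Proof.
  intros H E t Ht. apply limit1_ext with (fun s => (f s - f t) / (s - t)); [|apply H, Ht].
  intros s [Hs _]. rewrite !E by assumption. reflexivity.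
Qed.

Lemma deriv_on_lincomb f f' g g' h h' u v :
  deriv_on a b f f' -> deriv_on a b g g' ->
  (forall t, a <= t <= b -> h t = u * f t + v * g t) ->
  (forall t, a <= t <= b -> h' t = u * f' t + v * g' t) ->
  deriv_on a b h h'.
Proof.
  intros Hf Hg Eh Eh' t Ht. rewrite Eh' by exact Ht.
  apply limit1_ext with
    (fun s => u * ((f s - f t) / (s - t)) + v * ((g s - g t) / (s - t))).
  - intros s [Hs Hst]. rewrite !Eh by assumption.
    field. intro E; apply Hst; lra.
  - apply limit_plus; apply limit_mul; auto; apply limit1_in_const.
Qed.

Lemma deriv_on_of_derivable f f' :
  (forall t, derivable_pt_lim f t (f' t)) -> deriv_on a b f f'.
Proof.
  intros H t _ eps Heps. destruct (H t eps Heps) as [del Hdel].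
  exists del; split; [apply cond_pos|].
  intros s [[_ Hst] Hd]. simpl in *. unfold R_dist in *.
  replace s with (t + (s - t)) at 1 by ring.
  apply Hdel; [intro E; apply Hst; lra | exact Hd].
Qed.

Lemma deriv_on_comp_affine F F' c d :
  0 < c -> (forall t, a <= t <= b -> a <= c * t + d <= b) ->
  deriv_on a b F F' ->
  deriv_on a b (fun t => F (c * t + d)) (fun t => c * F' (c * t + d)).
Proof.
  intros Hc Hin H t Ht.
  assert (Haff : limit1_in (fun s => c * s + d) (fun s => a <= s <= b /\ s <> t)
                   (c * t + d) t).
  { apply limit_plus; [apply limit_mul; [apply limit1_in_const|apply lim_x]|].
    apply limit1_in_const. }
  pose proof (limit_comp _ _ _ _ _ _ _ Haff (H _ (Hin t Ht))) as Hq.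
  apply limit1_ext with
    (fun s => c * ((F (c * s + d) - F (c * t + d)) / (c * s + d - (c * t + d)))).
  - intros s [_ Hst]. assert (s - t <> 0) by (intro E; apply Hst; lra).
    replace (c * s + d - (c * t + d)) with (c * (s - t)) by ring.
    field. split; lra.
  - apply limit_mul; [apply limit1_in_const|].
    refine (limit1_in_subdomain _ _ _ _ _ _ Hq).
    intros s [Hs Hst]. split; [split; assumption|]. split; [apply Hin, Hs|].
    intro E. apply Hst, (Rmult_eq_reg_l c); lra.
Qed.

Lemma deriv_on_unique f f1 f2 :
  a < b -> deriv_on a b f f1 -> deriv_on a b f f2 ->
  forall t, a <= t <= b -> f1 t = f2 t.
Proof.
  intros Hab H1 H2 t Ht. eapply single_limit; [| apply H1, Ht | apply H2, Ht].
  intros alp Halp. unfold Rdist.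
  destruct (Rlt_le_dec t b) as [Htb|Htb].
  - set (e := Rmin alp (b - t) / 2).
    assert (0 < Rmin alp (b - t)) by (apply Rmin_glb_lt; lra).
    pose proof (Rmin_l alp (b - t)). pose proof (Rmin_r alp (b - t)).
    exists (t + e). replace (t + e - t) with e by ring.
    rewrite Rabs_right by (unfold e; lra). unfold e; repeat split; lra.
  - set (e := Rmin alp (t - a) / 2).
    assert (0 < Rmin alp (t - a)) by (apply Rmin_glb_lt; lra).
    pose proof (Rmin_l alp (t - a)). pose proof (Rmin_r alp (t - a)).
    exists (t - e). replace (t - e - t) with (- e) by ring.
    rewrite Rabs_Ropp, Rabs_right by (unfold e; lra). unfold e; repeat split; lra.
Qed.

Lemma deriv_on_cont f f' : deriv_on a b f f' -> cont_on a b f.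
Proof.
  intros H t Ht.
  assert (Hinc : limit1_in (fun s => (f s - f t) / (s - t) * (s - t))
                   (fun s => a <= s <= b /\ s <> t) (f' t * (t - t)) t).
  { apply limit_mul; [apply H, Ht|].
    apply limit_minus; [apply lim_x | apply limit1_in_const]. }
  rewrite Rminus_diag, Rmult_0_r in Hinc.
  intros eps Heps. destruct (Hinc eps Heps) as [alp [Halp Hf]].
  exists alp; split; [exact Halp|]. intros s [Hs Hd]. simpl in *. unfold R_dist in *.
  destruct (Req_dec s t) as [->|Hst].
  - rewrite Rminus_diag, Rabs_R0. exact Heps.
  - specialize (Hf s (conj (conj Hs Hst) Hd)). simpl in Hf. unfold R_dist in Hf.
    replace ((f s - f t) / (s - t) * (s - t) - 0) with (f s - f t) in Hf
      by (field; intro E; apply Hst; lra).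
    exact Hf.
Qed.

Lemma cont_on_minus f g : cont_on a b f -> cont_on a b g -> cont_on a b (fun t => f t - g t).
Proof. intros Hf Hg t Ht. apply limit_minus; auto. Qed.

Lemma Cn_derivs_cont n f D j :
  Cn_derivs n a b f D -> (j <= n)%nat -> cont_on a b (D j).
Proof.
  intros [_ [Hd Hc]] Hj. destruct (Nat.eq_dec j n) as [->|Hjn]; [exact Hc|].
  apply deriv_on_cont with (D (S j)), Hd. lia.
Qed.

Lemma cont_on_bounded g : a <= b -> cont_on a b g ->
  exists M, forall t, a <= t <= b -> Rabs (g t) <= M.
Proof.
  intros Hab H.
  (* extend [g] to [R] by clamping its argument, so that [continuity_ab_maj] applies *)
  set (cl := fun t => Rmax a (Rmin b t)).
  assert (Hcl : forall t, a <= cl t <= b).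
  { intro t; unfold cl. split; [apply Rmax_l|]. apply Rmax_lub; [lra|apply Rmin_l]. }
  assert (Hclid : forall t, a <= t <= b -> cl t = t).
  { intros t Ht; unfold cl. rewrite Rmin_right, Rmax_right; lra. }
  assert (Hcld : forall s t, a <= t <= b -> Rabs (cl s - t) <= Rabs (s - t)).
  { intros s t Ht. unfold cl, Rmax, Rmin.
    destruct (Rle_dec b s); destruct (Rle_dec a _); unfold Rabs;
      repeat destruct Rcase_abs; lra. }
  destruct (continuity_ab_maj (fun t => Rabs (g (cl t))) a b Hab) as [Mx [HM _]].
  - intros c Hc eps Heps. destruct (H c Hc eps Heps) as [alp [Halp Hg]].
    exists alp; split; [exact Halp|]. intros s [_ Hs]. simpl in *. unfold R_dist in *.
    rewrite (Hclid c Hc).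
    assert (Hs' : Rabs (cl s - c) < alp) by (pose proof (Hcld s c Hc); lra).
    specialize (Hg (cl s) (conj (Hcl s) Hs')). simpl in Hg. unfold R_dist in Hg.
    pose proof (Rabs_triang_inv (g (cl s)) (g c)).
    pose proof (Rabs_triang_inv (g c) (g (cl s))).
    rewrite Rabs_minus_sym in H1.
    unfold Rabs at 1. destruct Rcase_abs; lra.
  - exists (Rabs (g (cl Mx))). intros t Ht. specialize (HM t Ht). rewrite Hclid in HM; auto.
Qed.

Lemma sup_norm_is_lub g : a <= b -> cont_on a b g ->
  is_lub (fun v => exists t, a <= t <= b /\ v = Rabs (g t)) (sup_norm a b g).
Proof.
  intros Hab H. unfold sup_norm. apply epsilon_spec.
  destruct (cont_on_bounded g Hab H) as [M HM].
  destruct (completeness (fun v => exists t, a <= t <= b /\ v = Rabs (g t))) as [m Hm].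
  - exists M. intros v [t [Ht ->]]. auto.
  - exists (Rabs (g a)), a. split; [lra|reflexivity].
  - exists m; exact Hm.
Qed.

Lemma Rabs_le_sup_norm g t : a <= b -> cont_on a b g -> a <= t <= b ->
  Rabs (g t) <= sup_norm a b g.
Proof.
  intros Hab H Ht. apply (proj1 (sup_norm_is_lub g Hab H)). exists t; auto.
Qed.

Lemma sup_norm_le g B : a <= b -> cont_on a b g ->
  (forall t, a <= t <= b -> Rabs (g t) <= B) -> sup_norm a b g <= B.
Proof.
  intros Hab H HB. apply (proj2 (sup_norm_is_lub g Hab H)). intros v [t [Ht ->]]. auto.
Qed.

Lemma sup_norm_le_of_selfsimilar g mu V W :
  a <= b -> cont_on a b g -> 0 <= V < mu ->
  (forall z, a <= z <= b -> exists t, a <= t <= b /\ mu * Rabs (g z) <= V * Rabs (g t) + W) ->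
  sup_norm a b g <= W / (mu - V).
Proof.
  intros Hab H HV Hself.
  set (S := sup_norm a b g).
  assert (HS : S <= (V * S + W) / mu).
  { apply sup_norm_le; [exact Hab | exact H |]. intros z Hz.
    destruct (Hself z Hz) as [t [Ht Hzt]].
    apply Rmult_le_reg_l with mu; [lra|].
    replace (mu * ((V * S + W) / mu)) with (V * S + W) by (field; lra).
    pose proof (Rabs_le_sup_norm g t Hab H Ht) as Hgt. fold S in Hgt.
    apply Rmult_le_compat_l with (r := V) in Hgt; lra. }
  apply Rmult_le_reg_r with (mu - V); [lra|].
  replace (W / (mu - V) * (mu - V)) with W by (field; lra).
  apply Rmult_le_compat_r with (r := mu) in HS; [|lra].
  replace ((V * S + W) / mu * mu) with (V * S + W) in HS by (field; lra). lra.
Qed.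
End IntervalCalculus.

Definition is_deriv2 (f f2 : R -> R) : Prop :=
  exists f', (forall t, derivable_pt_lim f t (f' t)) /\
             (forall t, derivable_pt_lim f' t (f2 t)).

Lemma derivable_pt_lim_lincomb f g t l1 l2 u v :
  derivable_pt_lim f t l1 -> derivable_pt_lim g t l2 ->
  derivable_pt_lim (fun s => u * f s + v * g s) t (u * l1 + v * l2).
Proof.
  intros Hf Hg. apply (derivable_pt_lim_plus (mult_real_fct u f) (mult_real_fct v g));
    apply derivable_pt_lim_scal; assumption.
Qed.

Lemma derivable_pt_lim_affine f t l c d :
  derivable_pt_lim f (c * t + d) l ->
  derivable_pt_lim (fun s => f (c * s + d)) t (c * l).
Proof.
  intros H. apply is_derive_Reals. apply is_derive_Reals in H.
  apply (is_derive_comp f (fun s => c * s + d)); [exact H|].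
  auto_derive; [easy | ring].
Qed.

Lemma is_deriv2_ext f f2 g g2 :
  is_deriv2 f f2 -> (forall t, f t = g t) -> (forall t, f2 t = g2 t) -> is_deriv2 g g2.
Proof.
  intros [f' [H1 H2]] E E2.
  replace g with f by (apply functional_extensionality, E).
  exists f'; split; intro t; [apply H1 | rewrite <- E2; apply H2].
Qed.

Lemma is_deriv2_lincomb f f2 g g2 u v :
  is_deriv2 f f2 -> is_deriv2 g g2 ->
  is_deriv2 (fun t => u * f t + v * g t) (fun t => u * f2 t + v * g2 t).
Proof.
  intros [f' [Hf1 Hf2]] [g' [Hg1 Hg2]].
  exists (fun t => u * f' t + v * g' t); split; intro t;
    apply derivable_pt_lim_lincomb; auto.
Qed.

Lemma is_deriv2_scal f f2 c :
  is_deriv2 f f2 -> is_deriv2 (fun t => c * f t) (fun t => c * f2 t).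
Proof.
  intros H. apply (is_deriv2_ext _ _ _ _ (is_deriv2_lincomb _ _ _ _ c 0 H H)); intro t; ring.
Qed.

Lemma is_deriv2_affine f f2 c d :
  is_deriv2 f f2 -> is_deriv2 (fun t => f (c * t + d)) (fun t => c * c * f2 (c * t + d)).
Proof.
  intros [f' [H1 H2]]. exists (fun t => c * f' (c * t + d)); split; intro t.
  - apply derivable_pt_lim_affine, H1.
  - rewrite Rmult_assoc.
    apply (derivable_pt_lim_scal (fun t => f' (c * t + d))), derivable_pt_lim_affine, H2.
Qed.

Lemma is_deriv2_const c : is_deriv2 (fun _ => c) (fun _ => 0).
Proof. exists (fun _ => 0); split; intro; apply derivable_pt_lim_const. Qed.

Lemma is_deriv2_sum (F F2 : nat -> R -> R) n :
  (forall l, is_deriv2 (F l) (F2 l)) ->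
  is_deriv2 (fun t => sum_f_R0 (fun l => F l t) n) (fun t => sum_f_R0 (fun l => F2 l t) n).
Proof.
  intros H. induction n as [|n IH]; [apply H|].
  apply (is_deriv2_ext _ _ _ _ (is_deriv2_lincomb _ _ _ _ 1 1 IH (H (S n))));
    intro t; simpl; ring.
Qed.

Lemma deriv_on_chain_eq_deriv2 a b (G H : nat -> R -> R) m :
  a < b ->
  (forall j, (j < 2 * m)%nat -> deriv_on a b (G j) (G (S j))) ->
  (forall i, is_deriv2 (H i) (H (S i))) ->
  (forall t, a <= t <= b -> G 0%nat t = H 0%nat t) ->
  forall i, (i <= m)%nat -> forall t, a <= t <= b -> G (2 * i)%nat t = H i t.
Proof.
  intros Hab HG HH H0. induction i as [|i IH]; intros Hi; [exact H0|].
  destruct (HH i) as [H' [HH1 HH2]].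
  assert (E1 : forall t, a <= t <= b -> G (S (2 * i)) t = H' t).
  { apply (deriv_on_unique a b (G (2 * i)%nat)); [exact Hab | apply HG; lia |].
    apply deriv_on_ext with (H i); [apply deriv_on_of_derivable, HH1|].
    intros t Ht. symmetry. apply IH; [lia | exact Ht]. }
  replace (2 * S i)%nat with (S (S (2 * i))) by lia.
  apply (deriv_on_unique a b (G (S (2 * i)))); [exact Hab | apply HG; lia |].
  apply deriv_on_ext with H'; [apply deriv_on_of_derivable, HH2|].
  intros t Ht. symmetry. apply E1, Ht.
Qed.

Lemma is_deriv2_sin_pi : is_deriv2 (fun s => sin (PI * s)) (fun s => - (PI * PI) * sin (PI * s)).
Proof.
  exists (fun s => PI * cos (PI * s)); split; intro t; apply is_derive_Reals;
    auto_derive; auto; ring.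
Qed.

Lemma is_deriv2_cubic : is_deriv2 (fun s => (s ^ 3 - s) / 6) (fun s => s).
Proof.
  exists (fun s => (3 * s ^ 2 - 1) / 6); split; intro t; apply is_derive_Reals;
    auto_derive; auto; field.
Qed.

Lemma nonpos_of_convex f h : is_deriv2 f h ->
  (forall t, 0 <= t <= 1 -> 0 <= h t) -> f 0 <= 0 -> f 1 <= 0 ->
  forall t, 0 <= t <= 1 -> f t <= 0.
Proof.
  intros [g [Hf Hg]] Hh H0 H1 t Ht.
  destruct (Req_dec t 0) as [->|Ht0]; [exact H0|].
  destruct (Req_dec t 1) as [->|Ht1]; [exact H1|].
  destruct (MVT_cor2 f g 0 t ltac:(lra) (fun c _ => Hf c)) as [c1 [E1 Hc1]].
  destruct (MVT_cor2 f g t 1 ltac:(lra) (fun c _ => Hf c)) as [c2 [E2 Hc2]].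
  destruct (MVT_cor2 g h c1 c2 ltac:(lra) (fun c _ => Hg c)) as [c3 [E3 Hc3]].
  assert (Hmono : g c1 <= g c2) by (pose proof (Hh c3 ltac:(lra)); nra).
  (* [f t = f 0 + g c1 t = f 1 - g c2 (1 - t)]: average with weights [1 - t] and [t] *)
  assert (0 <= t * (1 - t) * (g c2 - g c1)) by (apply Rmult_le_pos; nra).
  nra.
Qed.

Lemma Rabs_le_of_deriv2_dominated f f2 g g2 :
  is_deriv2 f f2 -> is_deriv2 g g2 ->
  (forall s, 0 <= s <= 1 -> Rabs (f2 s) <= g2 s) ->
  f 0 = 0 -> f 1 = 0 -> g 0 = 0 -> g 1 = 0 ->
  forall s, 0 <= s <= 1 -> Rabs (f s) <= - g s.
Proof.
  intros Hf Hg Hdom Hf0 Hf1 Hg0 Hg1 s Hs.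
  assert (Hup := nonpos_of_convex _ _ (is_deriv2_lincomb _ _ _ _ 1 1 Hf Hg)).
  assert (Hlo := nonpos_of_convex _ _ (is_deriv2_lincomb _ _ _ _ (-1) 1 Hf Hg)).
  apply Rabs_le. split.
  - enough (- f s + g s <= 0) by lra.
    replace (- f s + g s) with (-1 * f s + 1 * g s) by ring.
    apply Hlo; [| rewrite Hf0, Hg0 | rewrite Hf1, Hg1 | ]; try lra.
    intros t Ht. pose proof (Hdom t Ht). pose proof (Rle_abs (f2 t)). lra.
  - enough (f s + g s <= 0) by lra.
    replace (f s + g s) with (1 * f s + 1 * g s) by ring.
    apply Hup; [| rewrite Hf0, Hg0 | rewrite Hf1, Hg1 | ]; try lra.
    intros t Ht. pose proof (Hdom t Ht). pose proof (Rabs_maj2 (f2 t)). lra.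
Qed.

Lemma PI_gt_3 : 3 < PI.
Proof. pose proof PI2_3_2. lra. Qed.

Lemma sin_ge_cubic a : 0 <= a <= PI -> a - a ^ 3 / 6 <= sin a.
Proof.
  intros Ha. destruct (sin_bound a 0 ltac:(lra) ltac:(lra)) as [H _].
  replace (a - a ^ 3 / 6) with (sin_approx a (2 * 0 + 1)); [exact H|].
  unfold sin_approx, sin_term. simpl. field.
Qed.

Lemma PI_le_33_10 : PI <= 33 / 10.
Proof.
  pose proof PI_4. pose proof PI_gt_3.
  pose proof (sin_ge_cubic (PI / 6) ltac:(lra)) as Hsin. rewrite sin_PI6 in Hsin.
  nra.
Qed.

Lemma cubic_le_sin_pi s : 0 <= s <= 1 -> (s - s ^ 3) / 6 <= / (3 * PI) * sin (PI * s).
Proof.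
  intros Hs. pose proof PI_le_33_10. pose proof PI_gt_3.
  apply (Rmult_le_reg_l (3 * PI)); [lra|].
  rewrite <- Rmult_assoc, Rinv_r, Rmult_1_l by lra.
  assert (PI * PI <= 1089 / 100) by nra.
  destruct (Rle_dec s (1 / 2)).
  - pose proof (sin_ge_cubic (PI * s) ltac:(nra)).
    assert (0 <= PI * s / 2 * (1 + s * s - PI * PI * s * s / 3)) by (apply Rmult_le_pos; nra).
    simpl in *. nra.
  - set (u := 1 - s). replace (PI * s) with (PI - PI * u) by (unfold u; ring).
    rewrite sin_PI_x. replace s with (1 - u) by (unfold u; ring).
    assert (0 <= u <= 1 / 2) by (unfold u; lra).
    pose proof (sin_ge_cubic (PI * u) ltac:(nra)).
    assert (0 <= PI * u * u * (3 / 2 - u / 2 - PI * PI * u / 6)) by (apply Rmult_le_pos; nra).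
    simpl in *. nra.
Qed.

Section LidstoneBounds.
Variable Lam : nat -> R -> R.
Hypothesis HLam : lidstone_family Lam.

Lemma is_deriv2_lidstone l : is_deriv2 (Lam (S l)) (Lam l).
Proof. destruct (proj2 HLam l) as [dL [H1 [H2 _]]]. exists dL; split; assumption. Qed.

Definition lidstone_bound (m : nat) : R := PI / 3 * (/ PI) ^ (2 * m).

Lemma lidstone_bound_S m : lidstone_bound (S m) * (PI * PI) = lidstone_bound m.
Proof.
  pose proof PI_gt_3. unfold lidstone_bound.
  replace (2 * S m)%nat with (S (S (2 * m))) by lia. simpl. field. lra.
Qed.

Lemma Rabs_lidstone_S_le m s : 0 <= s <= 1 ->
  Rabs (Lam (S m) s) <= lidstone_bound (S m) * sin (PI * s).
Proof.
  destruct HLam as [H0 HS].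
  assert (Hb0 : forall l, Lam (S l) 0 = 0) by (intro l; destruct (HS l) as [dL [_ [_ E]]]; apply E).
  assert (Hb1 : forall l, Lam (S l) 1 = 0) by (intro l; destruct (HS l) as [dL [_ [_ E]]]; apply E).
  pose proof PI_gt_3.
  revert s. induction m as [|m IH]; intros s Hs.
  - replace (lidstone_bound 1) with (/ (3 * PI)) by (unfold lidstone_bound; simpl; field; lra).
    eapply Rle_trans; [|apply cubic_le_sin_pi, Hs].
    replace ((s - s ^ 3) / 6) with (- ((s ^ 3 - s) / 6)) by field.
    apply (Rabs_le_of_deriv2_dominated _ _ _ _ (is_deriv2_lidstone 0) is_deriv2_cubic);
      [ intros t Ht; rewrite H0, Rabs_right; lra
      | apply Hb0 | apply Hb1 | field | field | exact Hs ].
  - set (C := lidstone_bound (S (S m))).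
    assert (Hg : is_deriv2 (fun t => - C * sin (PI * t)) (fun t => lidstone_bound (S m) * sin (PI * t))).
    { apply (is_deriv2_ext _ _ _ _ (is_deriv2_scal _ _ (- C) is_deriv2_sin_pi));
        intro t; [reflexivity|]. rewrite <- (lidstone_bound_S (S m)). fold C. ring. }
    replace (C * sin (PI * s)) with (- (- C * sin (PI * s))) by ring.
    apply (Rabs_le_of_deriv2_dominated _ _ _ _ (is_deriv2_lidstone (S m)) Hg);
      [ exact IH | apply Hb0 | apply Hb1 | rewrite Rmult_0_r, sin_0; ring
      | rewrite Rmult_1_r, sin_PI; ring | exact Hs ].
Qed.

Lemma Rabs_lidstone_le m s : 0 <= s <= 1 -> Rabs (Lam m s) <= lidstone_bound m.
Proof.
  intros Hs. pose proof PI_gt_3. destruct m as [|m].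
  - rewrite (proj1 HLam), Rabs_right by lra. unfold lidstone_bound. simpl. lra.
  - eapply Rle_trans; [apply Rabs_lidstone_S_le, Hs|].
    assert (0 < lidstone_bound (S m)).
    { unfold lidstone_bound. apply Rmult_lt_0_compat; [lra|].
      apply pow_lt, Rinv_0_lt_compat. lra. }
    pose proof (SIN_bound (PI * s)). nra.
Qed.

(* [lidstone_deriv2n i l] is the [2i]-th derivative of [Lam l]; it vanishes for [l < i]
   because [Lam 0] is linear. *)
Definition lidstone_deriv2n (i l : nat) (s : R) : R :=
  if Nat.leb i l then Lam (l - i) s else 0.

Lemma is_deriv2_lidstone_deriv2n i l :
  is_deriv2 (lidstone_deriv2n i l) (lidstone_deriv2n (S i) l).
Proof.
  unfold lidstone_deriv2n.
  destruct (Nat.leb_spec i l); destruct (Nat.leb_spec (S i) l); try lia.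
  - replace (l - i)%nat with (S (l - S i)) by lia. apply is_deriv2_lidstone.
  - replace (l - i)%nat with 0%nat by lia.
    apply (is_deriv2_ext (fun t => t) (fun _ => 0)); [| intro; symmetry; apply HLam | reflexivity].
    exists (fun _ => 1); split; intro; [apply derivable_pt_lim_id | apply derivable_pt_lim_const].
  - apply is_deriv2_const.
Qed.
End LidstoneBounds.

Lemma max_0_to_ge f m i : (i <= m)%nat -> f i <= max_0_to f m.
Proof.
  induction m as [|m IH]; intros Hi.
  - replace i with 0%nat by lia. apply Rle_refl.
  - simpl. destruct (Nat.eq_dec i (S m)) as [->|Him]; [apply Rmax_r|].
    eapply Rle_trans; [apply IH; lia | apply Rmax_l].
Qed.

Lemma max_1_to_ge f N n : (1 <= n <= N)%nat -> f n <= max_1_to f N.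
Proof.
  induction N as [|[|N] IH]; intros Hn; [lia | replace n with 1%nat by lia; apply Rle_refl |].
  change (max_1_to f (S (S N))) with (Rmax (max_1_to f (S N)) (f (S (S N)))).
  destruct (Nat.eq_dec n (S (S N))) as [->|HnN]; [apply Rmax_r|].
  eapply Rle_trans; [apply IH; lia | apply Rmax_l].
Qed.

Lemma min_1_to_le f N n : (1 <= n <= N)%nat -> min_1_to f N <= f n.
Proof.
  induction N as [|[|N] IH]; intros Hn; [lia | replace n with 1%nat by lia; apply Rle_refl |].
  change (min_1_to f (S (S N))) with (Rmin (min_1_to f (S N)) (f (S (S N)))).
  destruct (Nat.eq_dec n (S (S N))) as [->|HnN]; [apply Rmin_r|].
  eapply Rle_trans; [apply Rmin_l | apply IH; lia].
Qed.

Lemma min_1_to_pos f N :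
  (1 <= N)%nat -> (forall n, (1 <= n <= N)%nat -> 0 < f n) -> 0 < min_1_to f N.
Proof.
  induction N as [|[|N] IH]; intros HN Hf; [lia | apply Hf; lia |].
  change (min_1_to f (S (S N))) with (Rmin (min_1_to f (S N)) (f (S (S N)))).
  apply Rmin_glb_lt; [apply IH; [lia | intros n Hn; apply Hf; lia] | apply Hf; lia].
Qed.

Lemma Rabs_le_vnorm N al n : (1 <= n <= N)%nat -> Rabs (al n) <= vnorm N al.
Proof. apply (max_1_to_ge (fun n => Rabs (al n))). Qed.

Lemma vnorm_nonneg N al : (1 <= N)%nat -> 0 <= vnorm N al.
Proof.
  intros HN. apply Rle_trans with (Rabs (al 1%nat)); [apply Rabs_pos|].
  apply Rabs_le_vnorm. lia.
Qed.

Lemma sum_f_R0_shift (g : nat -> R) k q :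
  sum_f_R0 (fun l => if Nat.leb k l then g (l - k)%nat else 0) (k + q) = sum_f_R0 g q.
Proof.
  assert (Hlow : forall m, (m < k)%nat ->
            sum_f_R0 (fun l => if Nat.leb k l then g (l - k)%nat else 0) m = 0).
  { induction m as [|m IH]; intros Hm; simpl.
    - destruct (Nat.leb_spec k 0); [lia | reflexivity].
    - rewrite IH by lia. destruct (Nat.leb_spec k (S m)); [lia | ring]. }
  induction q as [|q IH].
  - rewrite Nat.add_0_r. destruct k as [|k]; [reflexivity|].
    rewrite tech5, Hlow, Nat.leb_refl, Nat.sub_diag by lia. simpl. ring.
  - rewrite Nat.add_succ_r, tech5, IH, tech5.
    destruct (Nat.leb_spec k (S (k + q))); [|lia].
    replace (S (k + q) - k)%nat with (S q) by lia. reflexivity.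
Qed.

Section LidstoneFIF.
Variable Lam : nat -> R -> R.
Hypothesis HLam : lidstone_family Lam.
Variables p N : nat.
Hypothesis HN : (1 <= N)%nat.
Variable x : nat -> R.
Hypothesis Hx : forall n : nat, (n < N)%nat -> x n < x (S n).
Variable y : nat -> nat -> R.

Lemma nodes_le i j : (i <= j <= N)%nat -> x i <= x j.
Proof.
  induction j as [|j IH]; intros Hij; [replace i with 0%nat by lia; lra|].
  destruct (Nat.eq_dec i (S j)) as [->|Hi]; [lra|].
  apply Rle_trans with (x j); [apply IH; lia | left; apply Hx; lia].
Qed.

Lemma nodes_ends_lt : x 0%nat < x N.
Proof. apply Rlt_le_trans with (x 1%nat); [apply Hx; lia | apply nodes_le; lia]. Qed.

Lemma a_coef_pos n : (1 <= n <= N)%nat -> 0 < a_coef x N n.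
Proof.
  intros Hn. pose proof nodes_ends_lt. unfold a_coef. apply Rdiv_lt_0_compat; [|lra].
  pose proof (Hx (n - 1)%nat ltac:(lia)) as Hxn. replace (S (n - 1)) with n in Hxn by lia. lra.
Qed.

Lemma L_map_eq n t : L_map x N n t = x (n - 1)%nat + a_coef x N n * (t - x 0%nat).
Proof. pose proof nodes_ends_lt. unfold L_map, a_coef. field. lra. Qed.

Lemma L_map_in n t : (1 <= n <= N)%nat -> x 0%nat <= t <= x N ->
  x 0%nat <= L_map x N n t <= x N.
Proof.
  intros Hn Ht. rewrite L_map_eq. pose proof nodes_ends_lt. pose proof (a_coef_pos n Hn).
  assert (a_coef x N n * (x N - x 0%nat) = x n - x (n - 1)%nat)
    by (unfold a_coef; field; lra).
  assert (a_coef x N n * (t - x 0%nat) <= a_coef x N n * (x N - x 0%nat))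
    by (apply Rmult_le_compat_l; lra).
  assert (0 <= a_coef x N n * (t - x 0%nat)) by (apply Rmult_le_pos; lra).
  pose proof (nodes_le 0 (n - 1) ltac:(lia)). pose proof (nodes_le n N ltac:(lia)). lra.
Qed.

Lemma node_interval_cover z : x 0%nat <= z <= x N ->
  exists n, (1 <= n <= N)%nat /\ x (n - 1)%nat <= z <= x n.
Proof.
  intros Hz.
  enough (G : forall m, (1 <= m <= N)%nat -> z <= x m ->
             exists n, (1 <= n <= m)%nat /\ x (n - 1)%nat <= z <= x n).
  { destruct (G N) as [n [Hn Hzn]]; [lia | lra | exists n; split; [lia | exact Hzn]]. }
  induction m as [|[|m] IH]; intros Hm Hzm; [lia | exists 1%nat; simpl; split; [lia|lra] |].
  destruct (Rle_dec z (x (S m))) as [Hle|Hgt].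
  - destruct (IH ltac:(lia) Hle) as [n [Hn Hzn]]. exists n. split; [lia | exact Hzn].
  - exists (S (S m)). split; [lia|]. replace (S (S m) - 1)%nat with (S m) by lia. lra.
Qed.

Lemma L_map_onto z : x 0%nat <= z <= x N ->
  exists n t, (1 <= n <= N)%nat /\ x 0%nat <= t <= x N /\ L_map x N n t = z.
Proof.
  intros Hz. destruct (node_interval_cover z Hz) as [n [Hn Hzn]].
  pose proof nodes_ends_lt. pose proof (a_coef_pos n Hn) as Hc.
  set (c := a_coef x N n) in *.
  assert (Hcw : c * (x N - x 0%nat) = x n - x (n - 1)%nat) by (unfold c, a_coef; field; lra).
  exists n, (x 0%nat + (z - x (n - 1)%nat) / c). split; [exact Hn|]. split.
  - split.
    + assert (0 <= (z - x (n - 1)%nat) / c) by (apply Rle_mult_inv_pos; lra). lra.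
    + enough ((z - x (n - 1)%nat) / c <= x N - x 0%nat) by lra.
      apply (Rmult_le_reg_l c); [exact Hc|].
      replace (c * ((z - x (n - 1)%nat) / c)) with (z - x (n - 1)%nat) by (field; lra). lra.
  - rewrite L_map_eq. fold c. field. lra.
Qed.

(* [boundary_deriv i] is the [2i]-th derivative of
   [t |-> sum_l (y_{0,2l} Lam_l ((x_N - t)/h) + y_{N,2l} Lam_l ((t - x_0)/h)) h^{2l}],
   [h = x_N - x_0], the part of [q_n] that is multiplied by [- alpha_n]. *)
Definition boundary_deriv (i : nat) (t : R) : R :=
  sum_f_R0 (fun l =>
    (y 0%nat (2 * l)%nat * lidstone_deriv2n Lam i l ((x N - t) / (x N - x 0%nat))
     + y N (2 * l)%nat * lidstone_deriv2n Lam i l ((t - x 0%nat) / (x N - x 0%nat)))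
    * (x N - x 0%nat) ^ (2 * l - 2 * i)) p.

Lemma is_deriv2_boundary_deriv i : is_deriv2 (boundary_deriv i) (boundary_deriv (S i)).
Proof.
  pose proof nodes_ends_lt as Hab. unfold boundary_deriv. set (h := x N - x 0%nat).
  set (F := fun l t =>
    y 0%nat (2 * l)%nat * h ^ (2 * l - 2 * i) * lidstone_deriv2n Lam i l (- / h * t + x N / h)
    + y N (2 * l)%nat * h ^ (2 * l - 2 * i) * lidstone_deriv2n Lam i l (/ h * t + - x 0%nat / h)).
  set (F2 := fun l t =>
    y 0%nat (2 * l)%nat * h ^ (2 * l - 2 * i)
      * (- / h * - / h * lidstone_deriv2n Lam (S i) l (- / h * t + x N / h))
    + y N (2 * l)%nat * h ^ (2 * l - 2 * i)
      * (/ h * / h * lidstone_deriv2n Lam (S i) l (/ h * t + - x 0%nat / h))).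
  apply (is_deriv2_ext (fun t => sum_f_R0 (fun l => F l t) p) (fun t => sum_f_R0 (fun l => F2 l t) p)).
  - apply is_deriv2_sum. intro l.
    apply is_deriv2_lincomb; apply is_deriv2_affine, is_deriv2_lidstone_deriv2n, HLam.
  - intro t. apply sum_eq. intros l _. unfold F.
    replace (- / h * t + x N / h) with ((x N - t) / h) by (field; unfold h; lra).
    replace (/ h * t + - x 0%nat / h) with ((t - x 0%nat) / h) by (field; unfold h; lra).
    ring.
  - intro t. apply sum_eq. intros l _. unfold F2.
    replace (- / h * t + x N / h) with ((x N - t) / h) by (field; unfold h; lra).
    replace (/ h * t + - x 0%nat / h) with ((t - x 0%nat) / h) by (field; unfold h; lra).
    unfold lidstone_deriv2n. destruct (Nat.leb_spec (S i) l); [|ring].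
    replace (2 * l - 2 * i)%nat with (2 + (2 * l - 2 * S i))%nat by lia.
    rewrite pow_add. field. unfold h; lra.
Qed.

Lemma q_fun_sub al1 al2 n t :
  q_fun Lam p x N y al1 n t - q_fun Lam p x N y al2 n t = - (al1 n - al2 n) * boundary_deriv 0 t.
Proof.
  unfold q_fun, boundary_deriv. rewrite <- minus_sum, scal_sum. apply sum_eq. intros l _.
  unfold lidstone_deriv2n. simpl (Nat.leb 0 l). rewrite !Nat.sub_0_r. ring.
Qed.

Lemma Rabs_y_le_rho l : (l <= p)%nat ->
  Rabs (y 0%nat (2 * l)%nat) <= rho p N y /\ Rabs (y N (2 * l)%nat) <= rho p N y.
Proof.
  intros Hl.
  pose proof (max_0_to_ge (fun k => Rmax (Rabs (y 0%nat (2 * k)%nat)) (Rabs (y N (2 * k)%nat))) p l Hl).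
  unfold rho. split; (eapply Rle_trans; [|eassumption]); [apply Rmax_l | apply Rmax_r].
Qed.

Lemma Rabs_boundary_deriv_le k t : (k <= p)%nat -> x 0%nat <= t <= x N ->
  Rabs (boundary_deriv k t) <= M_const p k x N y.
Proof.
  intros Hk Ht. pose proof nodes_ends_lt. pose proof PI_gt_3.
  set (h := x N - x 0%nat). assert (Hh : 0 < h) by (unfold h; lra).
  assert (Hs1 : 0 <= (x N - t) / h <= 1).
  { split; [apply Rle_mult_inv_pos; lra|].
    apply (Rmult_le_reg_r h); [exact Hh|]. unfold Rdiv. rewrite Rmult_assoc, Rinv_l; unfold h; lra. }
  assert (Hs2 : 0 <= (t - x 0%nat) / h <= 1).
  { split; [apply Rle_mult_inv_pos; lra|].
    apply (Rmult_le_reg_r h); [exact Hh|]. unfold Rdiv. rewrite Rmult_assoc, Rinv_l; unfold h; lra. }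
  set (g := fun m => 2 * rho p N y * lidstone_bound m * h ^ (2 * m)).
  replace (M_const p k x N y) with (sum_f_R0 (fun l => if Nat.leb k l then g (l - k)%nat else 0) p).
  2:{ replace p with (k + (p - k))%nat at 1 by lia. rewrite sum_f_R0_shift.
      unfold M_const. rewrite scal_sum. apply sum_eq. intros m _.
      unfold g, lidstone_bound, Rdiv. fold h. rewrite Rpow_mult_distr. ring. }
  unfold boundary_deriv. fold h.
  eapply Rle_trans; [apply sum_f_R0_triangle|]. apply sum_Rle. intros l Hl.
  destruct (Rabs_y_le_rho l Hl) as [Hy0 HyN].
  unfold lidstone_deriv2n. destruct (Nat.leb_spec k l); [|rewrite !Rmult_0_r, Rplus_0_r, Rmult_0_l, Rabs_R0; lra].
  pose proof (Rabs_lidstone_le Lam HLam (l - k) _ Hs1) as HL1.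
  pose proof (Rabs_lidstone_le Lam HLam (l - k) _ Hs2) as HL2.
  replace (2 * l - 2 * k)%nat with (2 * (l - k))%nat by lia.
  assert (Hhp : 0 <= h ^ (2 * (l - k))) by (apply pow_le; lra).
  unfold g. rewrite Rabs_mult, (Rabs_right (h ^ _)) by lra.
  apply Rmult_le_compat_r; [exact Hhp|].
  eapply Rle_trans; [apply Rabs_triang|]. rewrite !Rabs_mult.
  assert (Rabs (y 0%nat (2 * l)%nat) * Rabs (Lam (l - k)%nat ((x N - t) / h))
            <= rho p N y * lidstone_bound (l - k))
    by (apply Rmult_le_compat; auto using Rabs_pos).
  assert (Rabs (y N (2 * l)%nat) * Rabs (Lam (l - k)%nat ((t - x 0%nat) / h))
            <= rho p N y * lidstone_bound (l - k))
    by (apply Rmult_le_compat; auto using Rabs_pos).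
  lra.
Qed.

Lemma fif_derivs_selfsimilar al1 al2 l1 l2 D1 D2 :
  Cn_derivs (2 * p) (x 0%nat) (x N) l1 D1 -> Cn_derivs (2 * p) (x 0%nat) (x N) l2 D2 ->
  lidstone_FIF_eq Lam p x N y al1 l1 -> lidstone_FIF_eq Lam p x N y al2 l2 ->
  forall i n t, (i <= p)%nat -> (1 <= n <= N)%nat -> x 0%nat <= t <= x N ->
  a_coef x N n ^ (2 * i)
    * (D1 (2 * i)%nat (L_map x N n t) - D2 (2 * i)%nat (L_map x N n t))
  = al1 n * (D1 (2 * i)%nat t - D2 (2 * i)%nat t)
    + (al1 n - al2 n) * (D2 (2 * i)%nat t - boundary_deriv i t).
Proof.
  intros [H10 [H1d _]] [H20 [H2d _]] Hf1 Hf2 i n t Hi Hn Ht.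
  set (c := a_coef x N n). set (d := (x N * x (n - 1)%nat - x 0%nat * x n) / (x N - x 0%nat)).
  assert (HL : forall s, L_map x N n s = c * s + d) by reflexivity.
  assert (Hc : 0 < c) by (apply a_coef_pos, Hn).
  assert (HLin : forall s, x 0%nat <= s <= x N -> x 0%nat <= c * s + d <= x N)
    by (intros s Hs; rewrite <- HL; apply L_map_in; assumption).
  set (v := al1 n - al2 n).
  set (G := fun j s => c ^ j * (D1 j (c * s + d) - D2 j (c * s + d))
                       - al1 n * (D1 j s - D2 j s) - v * D2 j s).
  enough (HG : G (2 * i)%nat t = - v * boundary_deriv i t) by (unfold G in HG; rewrite HL; lra).
  apply (deriv_on_chain_eq_deriv2 _ _ G (fun i s => - v * boundary_deriv i s) p nodes_ends_lt);
    [| intro j; apply is_deriv2_scal, is_deriv2_boundary_deriv | | exact Hi | exact Ht].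
  - intros j Hj.
    pose proof (deriv_on_comp_affine _ _ _ _ c d Hc HLin (H1d j Hj)) as A1.
    pose proof (deriv_on_comp_affine _ _ _ _ c d Hc HLin (H2d j Hj)) as A2.
    apply (deriv_on_lincomb _ _ _ _ _ _ _ _ 1 1
             (deriv_on_lincomb _ _ _ _ _ _ _ _ (c ^ j) (- c ^ j) A1 A2
                (fun _ _ => eq_refl) (fun _ _ => eq_refl))
             (deriv_on_lincomb _ _ _ _ _ _ _ _ (- al1 n) (al1 n - v) (H1d j Hj) (H2d j Hj)
                (fun _ _ => eq_refl) (fun _ _ => eq_refl)));
      intros s _; unfold G; simpl; ring.
  - intros s Hs. unfold G. simpl pow. rewrite !H10, !H20 by auto.
    rewrite <- HL, (Hf1 n Hn s Hs), (Hf2 n Hn s Hs).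
    pose proof (q_fun_sub al1 al2 n s) as Hq. unfold v. rewrite <- Hq. ring.
Qed.

Lemma fif_derivs_diff_selfsimilar_bound al1 al2 l1 l2 D1 D2 k :
  Cn_derivs (2 * p) (x 0%nat) (x N) l1 D1 -> Cn_derivs (2 * p) (x 0%nat) (x N) l2 D2 ->
  lidstone_FIF_eq Lam p x N y al1 l1 -> lidstone_FIF_eq Lam p x N y al2 l2 ->
  (k <= p)%nat ->
  forall z, x 0%nat <= z <= x N -> exists t, x 0%nat <= t <= x N /\
    min_1_to (a_coef x N) N ^ (2 * k) * Rabs (D1 (2 * k)%nat z - D2 (2 * k)%nat z)
    <= vnorm N al1 * Rabs (D1 (2 * k)%nat t - D2 (2 * k)%nat t)
       + vnorm N (fun n => al1 n - al2 n)
         * (sup_norm (x 0%nat) (x N) (D2 (2 * k)%nat) + M_const p k x N y).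
Proof.
  intros Hl1 Hl2 Hf1 Hf2 Hk z Hz.
  destruct (L_map_onto z Hz) as [n [t [Hn [Ht <-]]]]. exists t. split; [exact Ht|].
  pose proof (fif_derivs_selfsimilar _ _ _ _ _ _ Hl1 Hl2 Hf1 Hf2 k n t Hk Hn Ht) as E.
  pose proof nodes_ends_lt.
  pose proof (a_coef_pos n Hn) as Hc.
  set (mu := min_1_to (a_coef x N) N). set (c := a_coef x N n) in E, Hc.
  assert (Hmu : 0 < mu) by (apply min_1_to_pos; [exact HN | exact a_coef_pos]).
  assert (Hmuc : mu ^ (2 * k) <= c ^ (2 * k))
    by (apply pow_incr; split; [lra | apply min_1_to_le, Hn]).
  assert (HD2 : Rabs (D2 (2 * k)%nat t) <= sup_norm (x 0%nat) (x N) (D2 (2 * k)%nat)).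
  { apply Rabs_le_sup_norm; [lra | apply (Cn_derivs_cont _ _ _ _ _ _ Hl2); lia | exact Ht]. }
  pose proof (Rabs_boundary_deriv_le k t Hk Ht) as HR.
  pose proof (Rabs_le_vnorm N al1 n Hn) as Hv1.
  pose proof (Rabs_le_vnorm N (fun n => al1 n - al2 n) n Hn) as Hv. simpl in Hv.
  apply Rle_trans with (Rabs (c ^ (2 * k) * (D1 (2 * k)%nat (L_map x N n t) - D2 (2 * k)%nat (L_map x N n t)))).
  { rewrite Rabs_mult, (Rabs_right (c ^ _)) by (apply Rle_ge, pow_le; lra).
    apply Rmult_le_compat_r; [apply Rabs_pos | exact Hmuc]. }
  rewrite E. eapply Rle_trans; [apply Rabs_triang|]. rewrite !Rabs_mult.
  apply Rplus_le_compat; apply Rmult_le_compat; try apply Rabs_pos; try assumption; try lra.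
  unfold Rminus at 1. eapply Rle_trans; [apply Rabs_triang|]. rewrite Rabs_Ropp. lra.
Qed.
End LidstoneFIF.

Theorem theorem4p3
  (Lam : nat -> R -> R) (HLam : lidstone_family Lam)
  (p N : nat) (HN : (1 <= N)%nat)
  (x : nat -> R) (Hx : forall n : nat, (n < N)%nat -> x n < x (S n))
  (y : nat -> nat -> R)
  (al1 al2 : nat -> R)
  (Hal1 : in_Theta p x N al1) (Hal2 : in_Theta p x N al2)
  (l1 l2 : R -> R) (D1 D2 : nat -> R -> R)
  (Hl1 : Cn_derivs (2 * p)%nat (x 0%nat) (x N) l1 D1)
  (Hl2 : Cn_derivs (2 * p)%nat (x 0%nat) (x N) l2 D2)
  (Hf1 : lidstone_FIF_eq Lam p x N y al1 l1)
  (Hf2 : lidstone_FIF_eq Lam p x N y al2 l2)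
  (k : nat) (Hk : (1 <= k <= p)%nat)
  (Hden : vnorm N al1 < (min_1_to (a_coef x N) N) ^ (2 * k)%nat) :
  sup_norm (x 0%nat) (x N) (fun t => D1 (2 * k)%nat t - D2 (2 * k)%nat t)
  <= vnorm N (fun n => al1 n - al2 n)
       / ((min_1_to (a_coef x N) N) ^ (2 * k)%nat - vnorm N al1)
     * (sup_norm (x 0%nat) (x N) (D2 (2 * k)%nat) + M_const p k x N y).
Proof.
  (* [Hal1] and [Hal2] only guarantee that the FIFs exist; the estimate does not use them. *)
  pose proof (nodes_ends_lt N HN x Hx) as Hab.
  assert (Hcont : cont_on (x 0%nat) (x N) (fun t => D1 (2 * k)%nat t - D2 (2 * k)%nat t)).
  { apply cont_on_minus; [apply (Cn_derivs_cont _ _ _ _ _ _ Hl1) | apply (Cn_derivs_cont _ _ _ _ _ _ Hl2)]; lia. }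
  replace (vnorm N (fun n => al1 n - al2 n) / (min_1_to (a_coef x N) N ^ (2 * k) - vnorm N al1)
             * (sup_norm (x 0%nat) (x N) (D2 (2 * k)%nat) + M_const p k x N y))
    with (vnorm N (fun n => al1 n - al2 n) * (sup_norm (x 0%nat) (x N) (D2 (2 * k)%nat) + M_const p k x N y)
          / (min_1_to (a_coef x N) N ^ (2 * k) - vnorm N al1)) by (unfold Rdiv; ring).
  apply sup_norm_le_of_selfsimilar; [lra | exact Hcont | split; [apply vnorm_nonneg, HN | exact Hden] |].
  apply (fif_derivs_diff_selfsimilar_bound Lam HLam p N HN x Hx y _ _ l1 l2); auto. lia.
Qed.
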